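(* Let $k$ be a field and let $P=\{0,1,2\}\times\{0,1,2\}$ with the product partial order. Let $M\colon P\to \mathbf{Vect}_k$ be the persistence module with $M_{(0,0)}=0$, $M_{(1,0)}=k$, $M_{(2,0)}=k$, $M_{(0,1)}=k$, $M_{(1,1)}=k^2$, $M_{(2,1)}=k$, $M_{(0,2)}=k$, $M_{(1,2)}=k$, $M_{(2,2)}=0$, whose structure maps between adjacent grid points are: horizontally, $M_{(1,0)}\to M_{(2,0)}$ is the identity, $M_{(0,1)}\to M_{(1,1)}$ is $x\mapsto (x,0)$, $M_{(1,1)}\to M_{(2,1)}$ is $(x,y)\mapsto x+y$, $M_{(0,2)}\to M_{(1,2)}$ is the identity, and all other horizontal maps are $0$; vertically, $M_{(0,1)}\to M_{(0,2)}$ is the identity, $M_{(1,0)}\to M_{(1,1)}$ is $y\mapsto (0,y)$, $M_{(1,1)}\to M_{(1,2)}$ is $(x,y)\mapsto x$, $M_{(2,0)}\to M_{(2,1)}$ is the identity, and all other vertical maps are $0$ (the remaining structure maps are the composites; this diagram commutes). Then $M$ has no good barcode, i.e., there is no multiset $B$ of subsets of $P$ such that for all $x\le y$ in $P$, $\operatorname{rank}(M_{x,y}\colon M_x\to M_y)$ equals the number of elements of $B$ (counted with multiplicity) containing both $x$ and $y$.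
   Context: For a poset $P$, a $P$-persistence module is a functor $M\colon P\to\mathbf{Vect}_k$; $M_{x,y}$ denotes the linear map $M_x\to M_y$ for $x\le y$ (with $M_{x,x}$ the identity). A multiset $B$ of subsets of $P$ is called a good barcode of $M$ if for all $x\le y\in P$, $\operatorname{rank}(M_{x,y})=|\{S\in B : x,y\in S\}|$ (counted with multiplicity). *)

From HB Require Import structures.
From mathcomp Require Import all_boot all_order all_algebra.
Set Implicit Arguments. Unset Strict Implicit. Unset Printing Implicit Defensive.
Import GRing.Theory.
Local Open Scope ring_scope.

Definition P : finType := ('I_3 * 'I_3)%type.
Definition leP (x y : P) : bool := ((x.1 <= y.1)%N && (x.2 <= y.2)%N).

Definition dimM (i j : nat) : nat :=
  match i, j with
  | 0, 0 => 0 | 1, 0 => 1 | 2, 0 => 1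
  | 0, 1 => 1 | 1, 1 => 2 | 2, 1 => 1
  | 0, 2 => 1 | 1, 2 => 1 | _, _ => 0
  end%N.

(* Matrices act on row vectors: v |-> v *m A. *)
Section Module.
Variable k : fieldType.

Definition e1 : 'M[k]_(1, 2) := \row_(j < 2) (if (j == 0 :> nat) then 1 else 0).
Definition e2 : 'M[k]_(1, 2) := \row_(j < 2) (if (j == 1 :> nat) then 1 else 0).
Definition sum12 : 'M[k]_(2, 1) := \col_(i < 2) 1.
Definition pr1 : 'M[k]_(2, 1) := \col_(i < 2) (if (i == 0 :> nat) then 1 else 0).

Definition hstep (i j : nat) : 'M[k]_(dimM i j, dimM i.+1 j) :=
  match i as i0, j as j0 return 'M[k]_(dimM i0 j0, dimM i0.+1 j0) with
  | 1, 0 => 1%:M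
  | 0, 1 => e1
  | 1, 1 => sum12
  | 0, 2 => 1%:M
  | _, _ => 0%R
  end.

Definition vstep (i j : nat) : 'M[k]_(dimM i j, dimM i j.+1) :=
  match i as i0, j as j0 return 'M[k]_(dimM i0 j0, dimM i0 j0.+1) with
  | 0, 1 => 1%:M
  | 1, 0 => e2
  | 1, 1 => pr1
  | 2, 0 => 1%:M
  | _, _ => 0%R
  end.

(* composite of horizontal steps M_(i1,j) -> M_(i2,j) (meaningful for i1 <= i2;
   for i1 = i2 it is the identity) *)
Fixpoint hpath (j i1 i2 : nat) : 'M[k]_(dimM i1 j, dimM i2 j) :=
  match i2 as i0 return 'M[k]_(dimM i1 j, dimM i0 j) with
  | 0 => conform_mx 0 (1%:M : 'M[k]_(dimM i1 j))
  | i.+1 => if (i1 <= i)%N then hpath j i1 i *m hstep i j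
            else conform_mx 0 (1%:M : 'M[k]_(dimM i1 j))
  end.

Fixpoint vpath (i j1 j2 : nat) : 'M[k]_(dimM i j1, dimM i j2) :=
  match j2 as j0 return 'M[k]_(dimM i j1, dimM i j0) with
  | 0 => conform_mx 0 (1%:M : 'M[k]_(dimM i j1))
  | j.+1 => if (j1 <= j)%N then vpath i j1 j *m vstep i j
            else conform_mx 0 (1%:M : 'M[k]_(dimM i j1))
  end.

(* M_{x,y} for x <= y: composite horizontally then vertically (the diagram commutes). *)
Definition Mmap (x y : P) : 'M[k]_(dimM x.1 x.2, dimM y.1 y.2) :=
  hpath x.2 x.1 y.1 *m vpath y.1 x.2 y.2.

End Module.

Definition good_barcode (k : fieldType) (B : seq {set P}) : Prop :=
  forall x y : P, leP x y ->
    \rank (Mmap k x y) = count (fun S : {set P} => (x \in S) && (y \in S)) B.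

(* Write a = (1,0), b = (0,1), c = (2,1), d = (1,2).  The structure maps give
     rank M_{x,x} = 1 for x = a, b, c,
     rank M_{a,c} = rank M_{b,c} = rank M_{b,d} = 1,   rank M_{a,d} = 0.
   In a good barcode B the point c lies in exactly one bar; since a and b each
   share a bar with c, that bar contains both a and b.  Likewise b lies in
   exactly one bar, and it contains both a and d.  Hence some bar contains a
   and d, contradicting rank M_{a,d} = 0. *)

From Pilot Require Import Defs.
From mathcomp Require Import all_boot all_order all_algebra.
Import GRing.Theory.
Local Open Scope ring_scope.
Set Implicit Arguments.
Unset Strict Implicit.

Section CommonBar.
Variable T : finType.

Definition together (B : seq {set T}) (x y : T) : nat :=
  count (fun S : {set T} => (x \in S) && (y \in S)) B.

Lemma together_sym (B : seq {set T}) (x y : T) : together B x y = together B y x.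
Proof. by rewrite /together; apply: eq_count => S; rewrite andbC. Qed.

Lemma common_bar (B : seq {set T}) (x y z : T) :
  (together B x x <= 1)%N -> (0 < together B x y)%N -> (0 < together B x z)%N ->
  (0 < together B y z)%N.
Proof.
rewrite /together; elim: B => [|S B IH] //=.
case xS: (x \in S) => /=; last first.
  rewrite !add0n => xB xyB xzB.
  by apply: leq_trans (IH xB xyB xzB) _; apply: leq_addl.
rewrite add1n ltnS leqn0 => /eqP noxB.
(* S is the only bar containing x, so the tail B contributes nothing. *)
have none (w : T) : count (fun R : {set T} => (x \in R) && (w \in R)) B = 0%N.
  apply/eqP; rewrite -leqn0 -noxB; apply: sub_count => R /andP[-> _].
  by rewrite andbb.
by rewrite !none !addn0; case: (y \in S); case: (z \in S).
Qed.

End CommonBar.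

Lemma hpath_refl (k : fieldType) (j i : nat) : hpath k j i i = 1%:M.
Proof. by case: i => [|i] /=; rewrite ?ltnn conform_mx_id. Qed.

Lemma vpath_refl (k : fieldType) (i j : nat) : vpath k i j j = 1%:M.
Proof. by case: j => [|j] /=; rewrite ?ltnn conform_mx_id. Qed.

Lemma rank_Mmap_refl (k : fieldType) (x : P) : \rank (Mmap k x x) = dimM x.1 x.2.
Proof. by rewrite /Mmap hpath_refl vpath_refl mulmx1 mxrank1. Qed.

Lemma e1_sum12 (k : fieldType) : e1 k *m sum12 k = 1%:M.
Proof.
apply/matrixP => i j; rewrite !ord1 !mxE big_ord_recr big_ord1 /= !mxE /=.
by rewrite mulr1 mul0r addr0.
Qed.

Lemma e1_pr1 (k : fieldType) : e1 k *m pr1 k = 1%:M.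
Proof.
apply/matrixP => i j; rewrite !ord1 !mxE big_ord_recr big_ord1 /= !mxE /=.
by rewrite mulr1 mul0r addr0.
Qed.

Lemma e2_pr1 (k : fieldType) : e2 k *m pr1 k = 0.
Proof.
apply/matrixP => i j; rewrite !ord1 !mxE big_ord_recr big_ord1 /= !mxE /=.
by rewrite mul0r mulr0 addr0.
Qed.

Definition pa : P := (@Ordinal 3 1 isT, @Ordinal 3 0 isT).
Definition pb : P := (@Ordinal 3 0 isT, @Ordinal 3 1 isT).
Definition pc : P := (@Ordinal 3 2 isT, @Ordinal 3 1 isT).
Definition pd : P := (@Ordinal 3 1 isT, @Ordinal 3 2 isT).

Lemma rank_Mmap_ac (k : fieldType) : \rank (Mmap k pa pc) = 1%N.
Proof. by rewrite /Mmap /= !conform_mx_id !mul1mx mxrank1. Qed.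

Lemma rank_Mmap_bc (k : fieldType) : \rank (Mmap k pb pc) = 1%N.
Proof. by rewrite /Mmap /= !conform_mx_id !mul1mx e1_sum12 mulmx1 mxrank1. Qed.

Lemma rank_Mmap_bd (k : fieldType) : \rank (Mmap k pb pd) = 1%N.
Proof. by rewrite /Mmap /= !conform_mx_id !mul1mx e1_pr1 mxrank1. Qed.

Lemma rank_Mmap_ad (k : fieldType) : \rank (Mmap k pa pd) = 0%N.
Proof. by rewrite /Mmap /= !conform_mx_id !mul1mx e2_pr1 mxrank0. Qed.

Theorem mainTheorem1 (k : fieldType) : ~ (exists B : seq {set P}, good_barcode k B).
Proof.
move=> [B good].
have single (x : P) : dimM x.1 x.2 = 1%N -> (together B x x <= 1)%N.
  by move=> dim1; rewrite /together -(good x x) ?rank_Mmap_refl ?dim1 // /Defs.leP !leqnn.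
have shared (x y : P) : Defs.leP x y -> \rank (Mmap k x y) = 1%N -> (0 < together B x y)%N.
  by move=> lexy rk1; rewrite /together -(good x y lexy) rk1.
have ab : (0 < together B pa pb)%N.
  apply: (common_bar (single pc erefl)); rewrite together_sym.
  - exact: (shared pa pc isT (rank_Mmap_ac k)).
  - exact: (shared pb pc isT (rank_Mmap_bc k)).
have ad : (0 < together B pa pd)%N.
  apply: (common_bar (single pb erefl)); first by rewrite together_sym.
  exact: (shared pb pd isT (rank_Mmap_bd k)).
by move: ad; rewrite /together -(good pa pd isT) rank_Mmap_ad.
Qed.
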